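(* Let $N,n_{\mathrm{el}}\ge1$, $M\in\mathbb{R}^{3N\times3N}$ constant symmetric positive definite, $V_{\mathrm{ext}}:\mathbb{R}^{3N}\to\mathbb{R}$ continuously differentiable, $h>0$, and inputs $u^{n+1/2}\in\mathbb{R}^{3N}$. For $i=1,\dots,n_{\mathrm{el}}$ let $k_i>0$, $l_{0,i}>0$, $a_{ij}\in\mathbb{R}$, define $\tilde C_i(q)=\frac{\bar q_i\cdot\bar q_i}{l_{0,i}^2}$ with $\bar q_i=\sum_{j=1}^Na_{ij}q_j$ ($q=(q_1,\dots,q_N)$, $q_j\in\mathbb{R}^3$), $V_{\mathrm{int},i}(c)=\frac{k_il_{0,i}}{4}(c-\ln c-1)$. Let $\overline{\nabla}V_{\mathrm{ext}}(q,q')$ be the midpoint (Gonzalez) discrete gradient, $\overline{\nabla}V_{\mathrm{ext}}(q,q')=\nabla V_{\mathrm{ext}}(\tfrac{q+q'}2)+\frac{V_{\mathrm{ext}}(q')-V_{\mathrm{ext}}(q)-\nabla V_{\mathrm{ext}}(\frac{q+q'}2)\cdot(q'-q)}{|q'-q|^2}(q'-q)$ for $q'\ne q$ and $\nabla V_{\mathrm{ext}}(q)$ otherwise, and $\overline{\nabla}V_{\mathrm{int}}(C,C')$ the componentwise Greenspan discrete derivative $\frac{V_{\mathrm{int},i}(C_i')-V_{\mathrm{int},i}(C_i)}{C_i'-C_i}$ (or $V_{\mathrm{int},i}'(\frac{C_i+C_i'}2)$ if $C_i'=C_i$). Let $(q^n,v^n,C^n)_{n=0}^{n_{\mathrm t}}$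 (with positive strain components) satisfy for each $n=0,\dots,n_{\mathrm t}-1$, with $x^{n+1/2}=\frac12(x^n+x^{n+1})$, $$q^{n+1}-q^n=h\,v^{n+1/2},\quad M(v^{n+1}-v^n)=h\big(-\overline{\nabla}V_{\mathrm{ext}}(q^n,q^{n+1})-D\tilde C(q^{n+1/2})^{\mathrm T}\overline{\nabla}V_{\mathrm{int}}(C^n,C^{n+1})+u^{n+1/2}\big),\quad C^{n+1}-C^n=h\,D\tilde C(q^{n+1/2})v^{n+1/2}.$$ If $C^0=\tilde C(q^0)$, then $C^n=\tilde C(q^n)$ for all $n=1,\dots,n_{\mathrm t}$.
   Context: $D\tilde C(q)$ denotes the Jacobian of $\tilde C=(\tilde C_1,\dots,\tilde C_{n_{\mathrm{el}}})$. This is the midpoint discrete-gradient time discretization of a port-Hamiltonian model of a discrete nonlinear elastodynamical system in which the strains $C$ are an independent state subject to the kinematic relation $C=\tilde C(q)$. *)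

From HB Require Import structures.
From mathcomp Require Import all_boot all_order all_algebra.
From mathcomp Require Import all_classical all_reals all_analysis.
Set Implicit Arguments. Unset Strict Implicit. Unset Printing Implicit Defensive.
Import Order.TTheory GRing.Theory Num.Theory.
Import numFieldNormedType.Exports.
Local Open Scope ring_scope.

(* Configuration space R^{3N}: column vectors indexed by 'I_(N*3);
   the k-th coordinate (k<3) of particle j (j<N) is  q (mxvec_index j k) 0. *)

Definition vdot {R : pzRingType} {m : nat} (x y : 'cV[R]_m) : R :=
  \sum_(l < m) x l 0 * y l 0.

Definition spd {R : numDomainType} {m : nat} (M : 'M[R]_m) : Prop :=
  M^T = M /\ forall x : 'cV[R]_m, x != 0 -> 0 < (x^T *m M *m x) 0 0.

(* continuously differentiable map V : R^m -> R : differentiable everywhere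
   and the derivative q |-> dV(q) is continuous (tested on every direction;
   in finite dimension this is continuity of q |-> dV(q)) *)
Definition C1 {R : realType} {m : nat} (V : 'cV[R]_m -> R) : Prop :=
  (forall q, differentiable V q) /\
  (forall w : 'cV[R]_m, continuous (fun q => 'd V q w)).

Definition grad {R : realType} {m : nat} (V : 'cV[R]_m -> R) (q : 'cV[R]_m)
  : 'cV[R]_m := \col_l ('D_(delta_mx l 0) V q).

Definition dgrad_mid {R : realType} {m : nat} (V : 'cV[R]_m -> R)
  (q q' : 'cV[R]_m) : 'cV[R]_m :=
  if q' == q then grad V q
  else let qm := (2%:R)^-1 *: (q + q') in
       grad V qm + ((V q' - V q - vdot (grad V qm) (q' - q))
                    / vdot (q' - q) (q' - q)) *: (q' - q).

Definition qbar {R : pzRingType} {N nel : nat} (a : 'M[R]_(nel, N))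
  (q : 'cV[R]_(N * 3)) (i : 'I_nel) (k : 'I_3) : R :=
  \sum_(j < N) a i j * q (mxvec_index j k) 0.

Definition Ctilde {R : fieldType} {N nel : nat} (a : 'M[R]_(nel, N))
  (l0 : 'I_nel -> R) (q : 'cV[R]_(N * 3)) : 'cV[R]_nel :=
  \col_i ((\sum_(k < 3) qbar a q i k ^+ 2) / l0 i ^+ 2).

Definition Jac {R : realType} {m p : nat} (F : 'cV[R]_m -> 'cV[R]_p)
  (q : 'cV[R]_m) : 'M[R]_(p, m) :=
  \matrix_(i, l) ('D_(delta_mx l 0) (fun x => F x i 0) q).

Definition Vint {R : realType} {nel : nat} (kk l0 : 'I_nel -> R)
  (i : 'I_nel) (c : R) : R :=
  kk i * l0 i / 4%:R * (c - ln c - 1).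

Definition dgrad_int {R : realType} {nel : nat} (kk l0 : 'I_nel -> R)
  (C C' : 'cV[R]_nel) : 'cV[R]_nel :=
  \col_i (if C' i 0 == C i 0
          then derive1 (Vint kk l0 i) ((2%:R)^-1 * (C i 0 + C' i 0))
          else (Vint kk l0 i (C' i 0) - Vint kk l0 i (C i 0))
               / (C' i 0 - C i 0)).

From HB Require Import structures.
From mathcomp Require Import all_boot all_order all_algebra.
From mathcomp Require Import all_classical all_reals all_analysis.
From mathcomp Require Import ring.
Import Order.TTheory GRing.Theory Num.Theory.
Import numFieldNormedType.Exports.
Local Open Scope ring_scope.
Local Open Scope classical_set_scope.

(* The strain map [Ctilde] is a quadratic form in [q], and for a quadratic map
   the midpoint rule is exact: Ctilde q' - Ctilde q = DCtilde((q + q')/2) (q' - q).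
   With q^{n+1} - q^n = h v^{n+1/2}, the strain update of the scheme is therefore
   exactly the increment of Ctilde(q^n), and the kinematic relation telescopes. *)

Lemma derive_quadratic_expansion {R : realType} {V : normedModType R} {f : V -> R}
    {x w : V} {L} (K : R) :
  (forall t, f (t *: w + x) = f x + t * L + t ^+ 2 * K) -> 'D_w f x = L.
Proof.
move=> fE; apply: cvg_lim => //.
have quotE : {near 0^', (fun t : R => L + t * K) =1
                        (fun t => t^-1 *: ((f \o shift x) (t *: w) - f x))}.
  near=> t => /=.
  have t_neq0 : t != 0 by near: t; exact: nbhs_dnbhs_neq.
  rewrite /shift /= fE.
  have -> : f x + t * L + t ^+ 2 * K - f x = t * (L + t * K) by rewrite expr2; ring.
  by rewrite /GRing.scale /= mulrA mulVf // mul1r.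
have quot_cvg := near_eq_cvg quotE.
apply: cvg_trans (quot_cvg _) _.
have lin_cvg : (fun t : R => L + t * K) @ (0 : R) --> L + 0 * K.
  by apply: cvgD; [exact: cvg_cst | apply: cvgM; [exact: cvg_id | exact: cvg_cst]].
rewrite mul0r addr0 in lin_cvg.
exact: cvg_within_filter lin_cvg.
Unshelve. all: by end_near.
Qed.

Section StrainMap.
Variables (R : realType) (N nel : nat) (a : 'M[R]_(nel, N)) (l0 : 'I_nel -> R).

Lemma qbarD (x y : 'cV[R]_(N * 3)) i k :
  qbar a (x + y) i k = qbar a x i k + qbar a y i k.
Proof. by rewrite /qbar -big_split; apply: eq_bigr => j _; rewrite mxE mulrDr. Qed.

Lemma qbarZ t (x : 'cV[R]_(N * 3)) i k : qbar a (t *: x) i k = t * qbar a x i k.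
Proof. by rewrite /qbar mulr_sumr; apply: eq_bigr => j _; rewrite mxE; ring. Qed.

Lemma qbarB (x y : 'cV[R]_(N * 3)) i k :
  qbar a (x - y) i k = qbar a x i k - qbar a y i k.
Proof. by rewrite -scaleN1r qbarD qbarZ mulN1r. Qed.

Lemma qbar_coord_expansion (w : 'cV[R]_(N * 3)) i k :
  \sum_l w l 0 * qbar a (delta_mx l 0) i k = qbar a w i k.
Proof.
rewrite /qbar; under eq_bigr do rewrite mulr_sumr.
rewrite exchange_big /=; apply: eq_bigr => j _.
under eq_bigr do rewrite mulrCA.
rewrite -mulr_sumr (bigD1 (mxvec_index j k)) //= big1 ?addr0.
  by rewrite !mxE !eqxx mulr1.
by move=> l /negbTE l_neq; rewrite !mxE eq_sym l_neq mulr0.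
Qed.

Lemma Jac_CtildeE x i l :
  Jac (Ctilde a l0) x i l =
  (\sum_k 2%:R * qbar a x i k * qbar a (delta_mx l 0) i k) / l0 i ^+ 2.
Proof.
rewrite mxE; apply: (derive_quadratic_expansion
  ((\sum_k qbar a (delta_mx l 0) i k ^+ 2) / l0 i ^+ 2)) => t.
rewrite !mxE; under eq_bigr do rewrite qbarD qbarZ.
have -> : \sum_(k < 3) (t * qbar a (delta_mx l 0) i k + qbar a x i k) ^+ 2 =
    \sum_(k < 3) qbar a x i k ^+ 2
    + t * \sum_k 2%:R * qbar a x i k * qbar a (delta_mx l 0) i k
    + t ^+ 2 * \sum_k qbar a (delta_mx l 0) i k ^+ 2.
  by rewrite !mulr_sumr -!big_split; apply: eq_bigr => k _ /=; ring.
by rewrite !mulrDl; ring.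
Qed.

Lemma Jac_Ctilde_mul x (w : 'cV[R]_(N * 3)) i :
  (Jac (Ctilde a l0) x *m w) i 0 =
  (\sum_k 2%:R * qbar a x i k * qbar a w i k) / l0 i ^+ 2.
Proof.
rewrite mxE; under eq_bigr do rewrite Jac_CtildeE mulrAC.
rewrite -mulr_suml; congr (_ * _).
under eq_bigr do rewrite mulr_suml.
rewrite exchange_big /=; apply: eq_bigr => k _.
rewrite -(qbar_coord_expansion w) [RHS]mulr_sumr.
by apply: eq_bigr => l _; ring.
Qed.

Lemma Ctilde_midpoint_rule (q q' : 'cV[R]_(N * 3)) :
  Ctilde a l0 q' - Ctilde a l0 q =
  Jac (Ctilde a l0) ((2%:R)^-1 *: (q + q')) *m (q' - q).
Proof.
apply/matrixP => i j; rewrite (ord1 j) Jac_Ctilde_mul !mxE -mulrBl; congr (_ * _).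
rewrite -sumrB; apply: eq_bigr => k _.
rewrite qbarZ qbarD qbarB.
have two_neq0 : (2%:R : R) != 0 by rewrite pnatr_eq0.
by field.
Qed.

End StrainMap.

Lemma telescoping_invariant {V : zmodType} {T : Type} (G : T -> V)
    (x : nat -> T) (c : nat -> V) (nt : nat) :
  c 0%N = G (x 0%N) ->
  (forall n, (n < nt)%N -> c n.+1 - c n = G (x n.+1) - G (x n)) ->
  forall n, (n <= nt)%N -> c n = G (x n).
Proof.
move=> c0 step; elim=> [//|n IH] n_lt.
by rewrite -(subrK (c n) (c n.+1)) step // IH 1?ltnW // subrK.
Qed.

Theorem mainTheorem5 (R : realType) (N nel nt : nat)
  (M : 'M[R]_(N * 3)) (Vext : 'cV[R]_(N * 3) -> R) (h : R)
  (u : nat -> 'cV[R]_(N * 3))   (* u n = u^{n+1/2} *)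
  (kk l0 : 'I_nel -> R) (a : 'M[R]_(nel, N))
  (q v : nat -> 'cV[R]_(N * 3)) (C : nat -> 'cV[R]_nel) :
  (0 < N)%N -> (0 < nel)%N ->
  spd M -> C1 Vext -> 0 < h ->
  (forall i, 0 < kk i) -> (forall i, 0 < l0 i) ->
  (forall n i, (n <= nt)%N -> 0 < C n i 0) ->
  (forall n, (n < nt)%N ->
     let qh := (2%:R)^-1 *: (q n + q n.+1) in
     let vh := (2%:R)^-1 *: (v n + v n.+1) in
     let DC := Jac (Ctilde a l0) qh in
     [/\ q n.+1 - q n = h *: vh,
         M *m (v n.+1 - v n)
           = h *: (- dgrad_mid Vext (q n) (q n.+1)
                   - DC^T *m dgrad_int kk l0 (C n) (C n.+1) + u n)
       & C n.+1 - C n = h *: (DC *m vh)]) ->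
  C 0%N = Ctilde a l0 (q 0%N) ->
  forall n, (1 <= n <= nt)%N -> C n = Ctilde a l0 (q n).
Proof.
move=> _ _ _ _ _ _ _ _ scheme C0 n /andP[_ n_le].
apply: (telescoping_invariant (Ctilde a l0) q C nt C0 _ n n_le) => m m_lt.
have [q_step _ C_step] := scheme m m_lt.
by rewrite C_step scalemxAr -q_step Ctilde_midpoint_rule.
Qed.
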